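(* Let $\mathsf G$ be a finite group, $\mathsf M\leqslant \mathsf G$, $\mathsf T\leqslant N_{\mathsf G}(\mathsf M)$ an abelian subgroup and $\mathsf r\in\mathsf T$. Assume that (q) $\mathsf M$ is quasi-simple; (n) $\mathsf r\notin \operatorname{Cent}_{\mathsf G}(\mathsf M)$; and (w) the set $(\mathcal O_{\mathsf r}^{\mathsf G}\cap \mathsf T)\setminus\big((\mathcal O_{\mathsf r}^{\mathsf M}\cap\mathsf T)\cup \operatorname{Cent}_{\mathsf G}(\mathsf M)\big)$ is nonempty. Then the conjugacy class $\mathcal O_{\mathsf r}^{\mathsf G}$ is of type C.
   Context: For a subgroup $H\leqslant G$ and $g\in G$, $\mathcal O_g^H=\{hgh^{-1}:h\in H\}$ is the orbit of $g$ under conjugation by $H$. A finite group is quasi-simple if it is perfect and $H/Z(H)$ is simple (hence non-abelian). A conjugacy class $\mathcal O$ of a finite group $G$ is of type C if there are $H\leqslant G$ and $r,s\in H\cap\mathcal O$ such that $rs\neq sr$, $H=\langle \mathcal O_r^H,\mathcal O_s^H\rangle$, $\mathcal O_r^H\neq\mathcal O_s^H$, and either $\min\{|\mathcal O_r^H|,|\mathcal O_s^H|\}>2$ or $\max\{|\mathcal O_r^H|,|\mathcal O_s^H|\}>4$. *)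

From mathcomp Require Import all_boot all_fingroup all_solvable.
Set Implicit Arguments. Unset Strict Implicit. Unset Printing Implicit Defensive.
Import GroupScope.
Local Open Scope group_scope.

(* O_g^H = {h g h^-1 : h in H} is the conjugacy class  g ^: H  (for H a group,
   {h g h^-1} and {h^-1 g h} range over the same set). *)

(* quasi-simple: perfect and M / Z(M) simple (mathcomp's [simple] includes
   nontriviality, hence non-abelian since M is perfect). *)
Definition quasisimple (gT : finGroupType) (M : {group gT}) : bool :=
  ([~: M, M] == M) && simple (M / 'Z(M)).

Definition typeC (gT : finGroupType) (G : {group gT}) (O : {set gT}) : Prop :=
  exists (H : {group gT}) (r s : gT),
    [/\ H \subset G, r \in H :&: O, s \in H :&: O & r * s != s * r] /\
    [/\ H :=: <<(r ^: H) :|: (s ^: H)>>, r ^: H != s ^: H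
      & (2 < minn #|r ^: H| #|s ^: H|) || (4 < maxn #|r ^: H| #|s ^: H|)].

From mathcomp Require Import all_boot all_fingroup all_solvable.
Set Implicit Arguments.
Unset Strict Implicit.
Unset Printing Implicit Defensive.
Local Open Scope group_scope.

(* A quasi-simple group M is generated by the M-class of every element y that
   normalises but does not centralise M (three subgroups lemma), and this class
   has more than two elements (M is perfect, so it has no subgroup of index 2).
   Given r and s as in the hypothesis, let H be generated by r ^: M and s ^: M.
   Since r and s commute and normalise M, H normalises both classes, so the
   H-classes of r and s are r ^: M and s ^: M: distinct, each of size > 2, and
   they generate H.  As s does not centralise M = <<r ^: M>>, some conjugate of
   r in M does not commute with s. *)

Lemma perfect_index_le2 (gT : finGroupType) (M K : {group gT}) :
  [~: M, M] = M -> K \subset M -> #|M : K| <= 2 -> M \subset K.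
Proof.
move=> dM sKM; case: (ltngtP #|M : K| 2) => // [lt2 _ | idx2 _].
  by rewrite -indexg_eq1 eqn_leq indexg_gt0 -ltnS lt2.
have nKM := normal_norm (index2_normal sKM idx2).
rewrite -dM -derg1; apply: (der1_min nKM).
by apply: cyclic_abelian; apply: prime_cyclic; rewrite card_quotient ?idx2.
Qed.

Section QuasiSimple.

Variables (gT : finGroupType) (M : {group gT}).
Hypothesis qsM : quasisimple M.

Let dM : [~: M, M] = M. Proof. by case/andP: qsM => /eqP. Qed.

Lemma quasisimple_normal (N : {group gT}) :
  N <| M -> N \subset 'Z(M) \/ M \subset N.
Proof.
move=> nNM; have [sNM nNM'] := andP nNM.
have [_ simM] := simpleP _ (proj2 (andP qsM)).
have nZM : M \subset 'N('Z(M)) := normal_norm (center_normal M).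
have nZN : N \subset 'N('Z(M)) := subset_trans sNM nZM.
have [N1 | NM] := simM _ (quotient_normal 'Z(M) nNM).
  by left; rewrite -(quotient_sub1 nZN) N1.
right; have sMNZ : M \subset N <*> 'Z(M).
  by rewrite -(quotientSGK nZM) ?joing_subr // quotientYidr // NM.
rewrite -dM -derg1; apply: der1_min => //.
apply: abelianS (quotientS N sMNZ) _.
rewrite quotientYidl; last exact: subset_trans (center_sub M) nNM'.
exact: quotient_abelian (center_abelian M).
Qed.

Lemma quasisimple_class_gen (y : gT) :
  y \in 'N(M) -> y \notin 'C(M) -> M \subset <<y ^: M>>.
Proof.
move=> nMy; apply: contraNT => sMK.
set K := <<y ^: M>>.
have nKM : M \subset 'N(K :&: M) by rewrite normsI ?normG ?norms_gen ?class_norm.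
have nK : (K :&: M)%G <| M by rewrite /normal subsetIr.
have [sKZ | sMKM] := quasisimple_normal nK; last first.
  by case/negP: sMK; apply: subset_trans sMKM (subsetIl _ _).
have yK : <[y]> \subset K by rewrite cycle_subG mem_gen ?class_refl.
(* [~: <[y]>, M] is central, so the three subgroups lemma kills [~: M, M, <[y]>]. *)
have sCZ : [~: <[y]>, M] \subset 'C(M).
  apply: subset_trans (subsetIr M _); apply: subset_trans sKZ; rewrite subsetI.
  rewrite commg_subr cycle_subG nMy andbT.
  by apply: subset_trans (commSg _ yK) _; rewrite commg_subl norms_gen ?class_norm.
have h1 : [~: M, <[y]>, M] :=: 1 by apply/commG1P; rewrite commGC.
have h2 : [~: <[y]>, M, M] :=: 1 by apply/commG1P.
by have /commG1P := three_subgroup h1 h2; rewrite dM centsC cycle_subG.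
Qed.

Lemma quasisimple_class_gt2 (y : gT) : y \notin 'C(M) -> 2 < #|y ^: M|.
Proof.
rewrite -index_cent1 ltnNge; apply: contra => le2.
rewrite -sub_cent1; apply: subset_trans (subsetIr M _).
exact: perfect_index_le2 dM (subsetIl _ _) le2.
Qed.

End QuasiSimple.

Lemma class_norm_commute (gT : finGroupType) (M : {group gT}) (x y : gT) :
  x \in 'N(M) -> commute y x -> x \in 'N(y ^: M).
Proof.
move=> nMx cyx; apply/normP.
by rewrite -class_rcoset norm_rlcoset // class_lcoset conjgE cyx mulKg.
Qed.

Lemma class_gen_classes (gT : finGroupType) (M : {group gT}) (y z : gT) :
  y \in 'N(M) -> z \in 'N(M) -> commute y z ->
  M \subset <<y ^: M :|: z ^: M>> ->
  y ^: <<y ^: M :|: z ^: M>> = y ^: M.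
Proof.
move=> nMy nMz cyz sMH; apply/eqP; rewrite eqEsubset (classS _ sMH) andbT.
have nNM : M \subset 'N('N(y ^: M)) by rewrite normsG ?class_norm.
rewrite class_sub_norm ?class_refl // gen_subG subUset !class_sub_norm //.
by rewrite !class_norm_commute.
Qed.

Theorem mainTheorem2 (gT : finGroupType) (G M T : {group gT}) (r : gT) :
  M \subset G ->
  T \subset 'N_G(M) ->
  abelian T ->
  r \in T ->
  quasisimple M ->
  r \notin 'C_G(M) ->
  ((r ^: G :&: T) :\: ((r ^: M :&: T) :|: 'C_G(M))) != set0 ->
  typeC G (r ^: G).
Proof.
move=> sMG sTN abT rT qsM nCr /set0Pn[s /setDP[/setIP[rGs sT]]].
rewrite !inE sT !andbT negb_or => /andP[nMs_r nCs].
have [sTG nTM] : T \subset G /\ T \subset 'N(M) by apply/andP; rewrite -subsetI.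
have [rG sG] := (subsetP sTG r rT, subsetP sTG s sT).
have [nMr nMs] := (subsetP nTM r rT, subsetP nTM s sT).
rewrite inE rG /= in nCr; rewrite sG /= in nCs.
have crs : commute r s := centsP abT r rT s sT.
set H := <<r ^: M :|: s ^: M>>%G.
have sMr := quasisimple_class_gen qsM nMr nCr.
have sMH : M \subset H := subset_trans sMr (genS (subsetUl _ _)).
have rH : r ^: H = r ^: M := class_gen_classes nMr nMs crs sMH.
have sH : s ^: H = s ^: M.
  by rewrite /H setUC class_gen_classes // -setUC.
have [x rMx ncx] : exists2 x, x \in r ^: M & x \notin 'C[s].
  apply/subsetPn; apply: contra nCs => sC.
  by rewrite -sub_cent1 (subset_trans sMr) ?gen_subG.
have xH : x ^: H = r ^: M by rewrite -rH; apply/class_eqP; rewrite rH.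
exists H, x, s; split; split.
- by rewrite gen_subG subUset !class_subG.
- by rewrite inE mem_gen ?inE ?rMx // (subsetP (classS r sMG)).
- by rewrite inE rGs mem_gen // inE class_refl orbT.
- by apply: contra ncx => /eqP/cent1P.
- by rewrite xH sH.
- by rewrite xH sH; apply: contra nMs_r => /eqP ->; apply: class_refl.
- by rewrite xH sH leq_min !quasisimple_class_gt2.
Qed.
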